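(* Let $(E,\rho_\theta)$ be a $b_v(\theta)$ metric space whose function $\theta$ is bounded, let $S:E\to E$, $u_0\in E$, and let $\{u_n\}$ be defined by $u_{n+1}=Su_n$ (so $u_n=S^nu_0$), with $u_n\neq u_m$ for all distinct $n,m\in\mathbb{N}$. Assume there exist $c\in[0,1)$ and $k_1,k_2\in[0,\infty)$ such that $\rho_\theta(u_m,u_n)\le c\,\rho_\theta(u_{m-1},u_{n-1})+k_1c^m+k_2c^m$ for all $n,m\in\mathbb{N}$. Then $\{u_n\}$ is a Cauchy sequence in $(E,\rho_\theta)$.
   Context: Let $E$ be a nonempty set, $\theta:E\times E\to[1,\infty)$ a function and $v\in\mathbb{N}$. A map $\rho_\theta:E\times E\to[0,\infty)$ is a $b_v(\theta)$ metric (and $(E,\rho_\theta)$ a $b_v(\theta)$ metric space) if for all $u,w\in E$: $\rho_\theta(u,w)=0$ iff $u=w$; $\rho_\theta(u,w)=\rho_\theta(w,u)$; and for all $u,z_1,\dots,z_v,w\in E$ pairwise distinct, $\rho_\theta(u,w)\le\theta(u,w)[\rho_\theta(u,z_1)+\rho_\theta(z_1,z_2)+\dots+\rho_\theta(z_{v-1},z_v)+\rho_\theta(z_v,w)]$. A sequence $\{u_n\}$ is Cauchy if for every $\varepsilon>0$ there is $n_0\in\mathbb{N}$ with $\rho_\theta(u_n,u_{n+p})<\varepsilon$ for all $n\ge n_0$ and $p>0$. *)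

From Stdlib Require Import Reals Lra Lia.
Open Scope R_scope.

Fixpoint chain_sum {E : Type} (rho : E -> E -> R) (z : nat -> E) (k : nat) : R :=
  match k with
  | O => 0
  | S k' => chain_sum rho z k' + rho (z k) (z (S k))
  end.

Definition is_bv_metric {E : Type} (theta : E -> E -> R) (v : nat)
  (rho : E -> E -> R) : Prop :=
  (forall x y, 1 <= theta x y) /\
  (forall x y, 0 <= rho x y) /\
  (forall x y, rho x y = 0 <-> x = y) /\
  (forall x y, rho x y = rho y x) /\
  (forall (u w : E) (z : nat -> E),
      u <> w ->
      (forall i, (1 <= i <= v)%nat -> z i <> u /\ z i <> w) ->
      (forall i j, (1 <= i <= v)%nat -> (1 <= j <= v)%nat -> i <> j -> z i <> z j) ->
      rho u w <= theta u w *
        (rho u (z 1%nat) + chain_sum rho z (v - 1) + rho (z v) w)).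

Definition bv_cauchy {E : Type} (rho : E -> E -> R) (u : nat -> E) : Prop :=
  forall eps, 0 < eps -> exists n0 : nat,
    forall n p : nat, (n0 <= n)%nat -> (0 < p)%nat -> rho (u n) (u (n + p)%nat) < eps.

From Stdlib Require Import Reals Lra Lia.
Open Scope R_scope.

(* Iterating the contraction gives
     d(u (a + j), u (b + j)) <= c^j d(u a, u b) + j K c^(a + j),   K = k1 + k2.
   Pick T with M c^T <= 1/2, where M bounds theta.  The b_v inequality from u 0
   to u (q + T) through the v points just below u T, with the last link
   d(u T, u (q + T)) estimated as above, yields
     d(u 0, u (q + T)) <= A + d(u 0, u q) / 2,
   so the orbit is bounded, d(u 0, u p) <= B.  Hence
   d(u n, u (n + p)) <= n c^n (B + K), and n c^n tends to 0 by Bernoulli's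
   inequality for (1 + h)^n with h = 1 - c. *)

Lemma pow_ge_binomial2 (h : R) (n : nat) :
  0 <= h -> INR n * (INR n - 1) / 2 * h ^ 2 <= (1 + h) ^ n.
Proof.
  intros h_ge0.
  enough (1 + INR n * h + INR n * (INR n - 1) / 2 * h ^ 2 <= (1 + h) ^ n)
    by (pose proof (pos_INR n); nra).
  induction n as [|n IHn]; [simpl; lra|].
  rewrite S_INR; simpl pow in *.
  assert (n_pred : 0 <= INR n * (INR n - 1)).
  { destruct n as [|n]; [simpl; lra|].
    rewrite S_INR; pose proof (pos_INR n); nra. }
  assert (0 <= INR n * (INR n - 1) * (h * h * h)) by (apply Rmult_le_pos; nra).
  pose proof (pos_INR n); nra.
Qed.

Lemma cv_INR_mult_pow (c : R) : 0 <= c < 1 -> Un_cv (fun n => INR n * c ^ n) 0.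
Proof.
  intros c_range eps eps_gt0.
  set (h := 1 - c).
  assert (h_gt0 : 0 < h) by (unfold h; lra).
  assert (h2_gt0 : 0 < h ^ 2) by (apply pow_lt; lra).
  destruct (INR_archimed 1 (2 / (h ^ 2 * eps) + 1)) as [N HN]; [lra|].
  exists N; intros n n_ge; unfold R_dist; rewrite Rminus_0_r.
  assert (n_large : 2 / (h ^ 2 * eps) + 1 < INR n)
    by (apply le_INR in n_ge; lra).
  assert (growth : c ^ n * (INR n * (INR n - 1) / 2 * h ^ 2) <= 1).
  { (* [c (1 + h) = 1 - h^2 <= 1] absorbs the growth of [(1 + h)^n]. *)
    apply Rle_trans with (c ^ n * (1 + h) ^ n).
    - apply Rmult_le_compat_l; [apply pow_le; lra|apply pow_ge_binomial2; lra].
    - rewrite <- Rpow_mult_distr.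
      apply Rle_trans with (1 ^ n); [|rewrite pow1; lra].
      apply pow_incr; unfold h; split; [apply Rmult_le_pos|]; nra. }
  assert (2 < (INR n - 1) * (h ^ 2 * eps)).
  { assert (2 / (h ^ 2 * eps) * (h ^ 2 * eps) = 2) by (field; nra).
    assert (0 < h ^ 2 * eps) by nra. nra. }
  assert (0 <= c ^ n) by (apply pow_le; lra).
  rewrite Rabs_pos_eq by (apply Rmult_le_pos; [apply pos_INR|lra]).
  pose proof (pos_INR n); nra.
Qed.

Lemma chain_sum_nonneg {E : Type} (rho : E -> E -> R) (z : nat -> E) (k : nat) :
  (forall x y, 0 <= rho x y) -> 0 <= chain_sum rho z k.
Proof.
  intros rho_ge0; induction k as [|k IHk]; simpl; [lra|].
  pose proof (rho_ge0 (z (S k)) (z (S (S k)))); lra.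
Qed.

Lemma bounded_initial_segment (f : nat -> R) (T : nat) :
  exists B, 0 <= B /\ forall q, (q <= T)%nat -> f q <= B.
Proof.
  induction T as [|T [B [B_ge0 HB]]].
  - exists (Rmax (f 0%nat) 0); split; [apply Rmax_r|].
    intros q q_le; replace q with 0%nat by lia; apply Rmax_l.
  - exists (Rmax (f (S T)) B); split; [eapply Rle_trans; [|apply Rmax_r]; lra|].
    intros q q_le; destruct (Nat.eq_dec q (S T)) as [->|q_ne]; [apply Rmax_l|].
    eapply Rle_trans; [apply HB; lia|apply Rmax_r].
Qed.

Lemma bounded_of_halving_shift (f : nat -> R) (T : nat) (A : R) :
  (1 <= T)%nat ->
  (forall q, (1 <= q)%nat -> f (q + T)%nat <= A + f q / 2) ->
  exists B, forall p, f p <= B.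
Proof.
  intros T_ge1 halving.
  destruct (bounded_initial_segment f T) as [B0 [B0_ge0 HB0]].
  exists (2 * Rmax A 0 + B0).
  pose proof (Rmax_l A 0); pose proof (Rmax_r A 0).
  intros p; induction p as [p IHp] using (well_founded_induction Nat.lt_wf_0).
  destruct (Nat.le_gt_cases p T) as [p_le|p_gt].
  - specialize (HB0 p p_le); lra.
  - replace p with (p - T + T)%nat by lia.
    specialize (halving (p - T)%nat ltac:(lia)).
    specialize (IHp (p - T)%nat ltac:(lia)); lra.
Qed.

Lemma dist_shift_le {E : Type} (rho : E -> E -> R) (u : nat -> E) (c K : R) :
  0 <= c ->
  (forall m n, rho (u (S m)) (u (S n)) <= c * rho (u m) (u n) + K * c ^ S m) ->
  forall a b j, rho (u (a + j)%nat) (u (b + j)%nat)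
                <= c ^ j * rho (u a) (u b) + INR j * K * c ^ (a + j).
Proof.
  intros c_ge0 step a b j; induction j as [|j IHj].
  - rewrite !Nat.add_0_r; simpl; lra.
  - rewrite !Nat.add_succ_r, S_INR.
    specialize (step (a + j)%nat (b + j)%nat).
    apply (Rmult_le_compat_l c) in IHj; [simpl pow in *; nra|exact c_ge0].
Qed.

Lemma bv_orbit_triangle {E : Type} (theta : E -> E -> R) (v : nat)
    (rho : E -> E -> R) (u : nat -> E) :
  is_bv_metric theta v rho ->
  (forall n m, n <> m -> u n <> u m) ->
  forall L q, (1 <= q)%nat ->
  rho (u 0%nat) (u (q + (L + v))%nat)
    <= theta (u 0%nat) (u (q + (L + v))%nat) *
       (rho (u 0%nat) (u (L + 1)%nat) + chain_sum rho (fun i => u (L + i)%nat) (v - 1)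
        + rho (u (L + v)%nat) (u (q + (L + v))%nat)).
Proof.
  intros (_ & _ & _ & _ & triangle) u_inj L q q_ge1.
  apply (triangle _ _ (fun i => u (L + i)%nat)); intros; try split; apply u_inj; lia.
Qed.

Section BvOrbit.

Variables (E : Type) (theta : E -> E -> R) (v : nat) (rho : E -> E -> R)
  (M : R) (u : nat -> E) (c K : R).

Hypotheses (rho_bv : is_bv_metric theta v rho) (theta_le : forall x y, theta x y <= M)
  (u_inj : forall n m, n <> m -> u n <> u m) (c_range : 0 <= c < 1) (K_ge0 : 0 <= K)
  (u_step : forall m n, rho (u (S m)) (u (S n)) <= c * rho (u m) (u n) + K * c ^ S m).

Let rho_ge0 : forall x y, 0 <= rho x y.
Proof. apply rho_bv. Qed.

Lemma bv_orbit_bounded : exists B, forall p, rho (u 0%nat) (u p) <= B.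
Proof.
  assert (M_ge1 : 1 <= M).
  { pose proof (proj1 rho_bv (u 0%nat) (u 0%nat)).
    pose proof (theta_le (u 0%nat) (u 0%nat)); lra. }
  destruct (pow_lt_1_zero c ltac:(rewrite Rabs_pos_eq; lra) (/ (2 * M)))
    as [N HN]; [apply Rinv_0_lt_compat; lra|].
  set (T := (S N + v)%nat).
  assert (cT_small : M * c ^ T <= / 2).
  { specialize (HN T ltac:(unfold T; lia)).
    rewrite Rabs_pos_eq in HN by (apply pow_le; lra).
    apply (Rmult_lt_compat_l M) in HN; [|lra].
    assert (M * / (2 * M) = / 2) by (field; lra); lra. }
  assert (cT_range : 0 <= c ^ T <= 1).
  { split; [apply pow_le; lra|rewrite <- (pow1 T); apply pow_incr; lra]. }
  set (X := rho (u 0%nat) (u (S N + 1)%nat) + chain_sum rho (fun i => u (S N + i)%nat) (v - 1)).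
  assert (X_ge0 : 0 <= X).
  { pose proof (chain_sum_nonneg rho (fun i => u (S N + i)%nat) (v - 1) rho_ge0).
    pose proof (rho_ge0 (u 0%nat) (u (S N + 1)%nat)); unfold X; lra. }
  apply (bounded_of_halving_shift (fun p => rho (u 0%nat) (u p)) T (M * (X + INR T * K)));
    [unfold T; lia|].
  intros q q_ge1; cbv beta.
  pose proof (bv_orbit_triangle theta v rho u rho_bv u_inj (S N) q q_ge1) as triangle.
  pose proof (dist_shift_le rho u c K (proj1 c_range) u_step 0 q T) as shifted.
  fold T X in triangle; rewrite Nat.add_0_l in shifted.
  pose proof (rho_ge0 (u T) (u (q + T)%nat)); pose proof (rho_ge0 (u 0%nat) (u q)).
  pose proof (pos_INR T).
  assert (theta (u 0%nat) (u (q + T)%nat) * (X + rho (u T) (u (q + T)%nat))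
          <= M * (X + rho (u T) (u (q + T)%nat)))
    by (apply Rmult_le_compat_r; [lra|apply theta_le]).
  assert (M * rho (u T) (u (q + T)%nat) <= M * (c ^ T * rho (u 0%nat) (u q) + INR T * K * c ^ T))
    by (apply Rmult_le_compat_l; lra).
  assert (M * c ^ T * rho (u 0%nat) (u q) <= / 2 * rho (u 0%nat) (u q))
    by (apply Rmult_le_compat_r; lra).
  assert (M * (INR T * K) * c ^ T <= M * (INR T * K) * 1)
    by (apply Rmult_le_compat_l; [apply Rmult_le_pos; nra|lra]).
  nra.
Qed.

Lemma bv_orbit_cauchy : bv_cauchy rho u.
Proof.
  destruct bv_orbit_bounded as [B HB].
  assert (B_ge0 : 0 <= B)
    by (pose proof (HB 0%nat); pose proof (rho_ge0 (u 0%nat) (u 0%nat)); lra).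
  intros eps eps_gt0.
  destruct (cv_INR_mult_pow c c_range (eps / (B + K + 1))) as [N HN].
  { apply Rdiv_lt_0_compat; lra. }
  exists (S N); intros n p n_gt _.
  specialize (HN n ltac:(lia)); unfold R_dist in HN.
  rewrite Rminus_0_r, Rabs_pos_eq in HN by (apply Rmult_le_pos; [apply pos_INR|apply pow_le; lra]).
  pose proof (dist_shift_le rho u c K (proj1 c_range) u_step 0 p n) as shifted.
  rewrite Nat.add_0_l, (Nat.add_comm p n) in shifted.
  assert (n_ge1 : 1 <= INR n) by (apply (le_INR 1); lia).
  assert (0 <= c ^ n) by (apply pow_le; lra).
  pose proof (HB p).
  apply (Rmult_lt_compat_r (B + K + 1)) in HN; [|lra].
  assert (eps / (B + K + 1) * (B + K + 1) = eps) by (field; lra).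
  assert (c ^ n * rho (u 0%nat) (u p) <= c ^ n * B) by (apply Rmult_le_compat_l; lra).
  assert (0 <= (INR n - 1) * (c ^ n * B)) by (apply Rmult_le_pos; [lra|apply Rmult_le_pos; lra]).
  assert (0 <= INR n * c ^ n) by (apply Rmult_le_pos; lra).
  nra.
Qed.

End BvOrbit.

Theorem mainTheorem8 (E : Type) (theta : E -> E -> R) (v : nat) (rho : E -> E -> R)
  (S : E -> E) (u0 : E) (c k1 k2 : R) :
  (1 <= v)%nat ->
  is_bv_metric theta v rho ->
  (exists M : R, forall x y, theta x y <= M) ->
  (forall n m : nat, n <> m -> Nat.iter n S u0 <> Nat.iter m S u0) ->
  0 <= c < 1 -> 0 <= k1 -> 0 <= k2 ->
  (forall m n : nat, (1 <= m)%nat -> (1 <= n)%nat ->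
     rho (Nat.iter m S u0) (Nat.iter n S u0)
       <= c * rho (Nat.iter (m - 1) S u0) (Nat.iter (n - 1) S u0) + k1 * c ^ m + k2 * c ^ m) ->
  bv_cauchy rho (fun n => Nat.iter n S u0).
Proof.
  rename S into f.
  intros _ rho_bv [M theta_le] orbit_inj c_range k1_ge0 k2_ge0 contraction.
  apply (bv_orbit_cauchy E theta v rho M _ c (k1 + k2)); auto; [lra|].
  intros m n.
  specialize (contraction (S m) (S n) ltac:(lia) ltac:(lia)).
  rewrite !Nat.sub_succ, !Nat.sub_0_r in contraction; lra.
Qed.
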